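(* Assume the setup in the context and let $\preceq$ be the total order on $X$ given by: $u^*_{t,s}\prec u_{j,i}$ for all indices, $u_{t,s}\prec u_{j,i}$ iff $(t,s)<(j,i)$ lexicographically, and $u^*_{t,s}\prec u^*_{j,i}$ iff $(t,s)<(j,i)$ lexicographically, extended degree-lexicographically to monomials. Then $R$ is not a Gröbner basis of $I$ with respect to $\preceq$ (i.e. the tips of elements of $R$ do not generate the monoid ideal of tips of nonzero elements of $I$). In particular $R$ is not a universal Gröbner basis of $I$.
   Context: Let $k$ be a field and $n\ge 2$ an integer; write $[n]=\{1,\dots,n\}$ and $r(i)=n+1-i$. Let $X=\{u_{j,i},u^*_{j,i}:(j,i)\in[n]^2\}$ be a set of $2n^2$ distinct symbols and let $*$ be the involution of $X$ exchanging $u_{j,i}$ and $u^*_{j,i}$. Let $k\langle X\rangle$ be the free unital $k$-algebra on $X$. For an $n\times n$ matrix $v=(v_{j,i})$ with entries in $X$ define $v^t_{j,i}=v_{i,j}$, $v^\star_{j,i}=(v_{r(j),r(i)})^*$, $v^\dagger_{j,i}=(v_{r(i),r(j)})^*$. Let $u=(u_{j,i})$ and $M=\{u,u^t,u^\star,u^\dagger\}$. Let $I$ be the two-sided ideal generated by $R=\{\sum_{s=1}^n v_{j,r(s)}v^\dagger_{s,r(i)}-\delta_{j,i}1: v\in M,(j,i)\in[n]^2\}$ (these are exactly the relations $uu^{*T}=1$-type unitarity relations: $\sum_s u_{j,s}u^*_{i,s}=\delta_{j,i}$, $\sum_s u_{s,j}u^*_{s,i}=\delta_{j,i}$, $\sum_s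 u^*_{s,j}u_{s,i}=\delta_{j,i}$, $\sum_s u^*_{j,s}u_{i,s}=\delta_{j,i}$). A Gröbner basis of $I$ with respect to a monomial order is a subset $G\subseteq I$ such that the leading monomials of elements of $G$ generate, as a two-sided monoid ideal of the free monoid on $X$, the set of leading monomials of all nonzero elements of $I$. *)

From mathcomp Require Import all_boot all_algebra.
Set Implicit Arguments. Unset Strict Implicit. Unset Printing Implicit Defensive.
Import GRing.Theory.
Local Open Scope ring_scope.

(* Alphabet X: (false, j, i) = u_{j,i}, (true, j, i) = u^*_{j,i}; indices are
   0-based, i.e. 'I_n stands for [n] via i |-> i+1. *)
Definition sym (n : nat) : finType := (bool * 'I_n * 'I_n)%type.
Definition word (n : nat) := seq (sym n).

Definition ustar {n} (x : sym n) : sym n := (~~ x.1.1, x.1.2, x.2).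
(* r(i) = n+1-i in 1-based indexing, i.e. n-1-i in 0-based *)
Definition rr {n} (i : 'I_n) : 'I_n := rev_ord i.

Definition mat n := 'I_n -> 'I_n -> sym n.
Definition u_mat n : mat n := fun j i => (false, j, i).
Definition tr_mat n (v : mat n) : mat n := fun j i => v i j.
Definition star_mat n (v : mat n) : mat n := fun j i => ustar (v (rr j) (rr i)).
Definition dag_mat n (v : mat n) : mat n := fun j i => ustar (v (rr i) (rr j)).

Definition Mmat n (a : 'I_4) : mat n :=
  match val a with
  | 0 => @u_mat n
  | 1 => tr_mat (@u_mat n)
  | 2 => star_mat (@u_mat n)
  | _ => dag_mat (@u_mat n)
  end.

(* Elements of k<X> represented as formal finite sums  sum c_t * w_t ;
   the actual polynomial is the coefficient function [coef p]. *)
Definition fpoly (k : fieldType) n := seq (k * word n).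
Definition coef {k : fieldType} {n} (p : fpoly k n) (w : word n) : k :=
  \sum_(t <- p) (if t.2 == w then t.1 else 0).
Definition fmul {k : fieldType} {n} (p q : fpoly k n) : fpoly k n :=
  [seq (a.1 * b.1, a.2 ++ b.2) | a <- p, b <- q].
Definition fmono {k : fieldType} {n} (w : word n) : fpoly k n := [:: (1, w)].

Definition rel {k : fieldType} n (a : 'I_4) (j i : 'I_n) : fpoly k n :=
  [seq (1, [:: @Mmat n a j (rr s); dag_mat (@Mmat n a) s (rr i)]) | s <- enum 'I_n]
  ++ (if j == i then [:: (-1, [::])] else [::]).

Definition Ridx n := ('I_4 * 'I_n * 'I_n)%type.
Definition relR {k : fieldType} n (x : Ridx n) : fpoly k n := @rel k n x.1.1 x.1.2 x.2.

Definition inI {k : fieldType} n (f : word n -> k) : Prop :=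
  exists L : seq (k * word n * Ridx n * word n),
    forall w, f w = \sum_(t <- L)
        t.1.1.1 * coef (fmul (fmul (fmono t.1.1.2) (@relR k n t.1.2)) (fmono t.2)) w.

(* The order on X: all u^* below all u; within each kind lexicographic in (j,i). *)
Definition rk {n} (x : sym n) : nat :=
  (if x.1.1 then 0 else n * n) + (val x.1.2 * n + val x.2).

Fixpoint lexlt {n} (a b : word n) : bool :=
  match a, b with
  | x :: a', y :: b' => (rk x < rk y)%N || ((x == y) && lexlt a' b')
  | _, _ => false
  end.

Definition deglex_lt {n} (a b : word n) : bool :=
  (size a < size b)%N || ((size a == size b) && lexlt a b).
Definition deglex_le {n} (a b : word n) : bool := (a == b) || deglex_lt a b.

Definition is_tip {k : fieldType} {n} (f : word n -> k) (m : word n) : Prop :=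
  f m != 0 /\ forall m', f m' != 0 -> deglex_le m' m.

Definition R_is_groebner (k : fieldType) n : Prop :=
  forall (f : word n -> k) (m : word n), @inI k n f -> is_tip f m ->
    exists (x : Ridx n) (mr a b : word n),
      is_tip (coef (@relR k n x)) mr /\ m = a ++ mr ++ b.

From Pilot Require Import Defs.
From mathcomp Require Import all_boot all_algebra zify.
Set Implicit Arguments. Unset Strict Implicit. Unset Printing Implicit Defensive.
Import GRing.Theory.
Local Open Scope ring_scope.

(* Let r = sum_s u_{1,s} u*_{1,s} - 1 and r' = sum_s u*_{1,s} u_{1,s} - 1 be the
   relations of R for (u; 1, 1) and (u^star; n, n), and f = r u_{1,n} - u_{1,n} r'.
   The constants and the two cubic terms with s = n cancel, so the tip of f is
   u_{1,n} u*_{1,n-1} u_{1,n-1}.  The tip of each relation of R is its quadratic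
   term with extreme summation index, whose letters all lie in the last row or the
   last column; as n >= 2, the middle letter u*_{1,n-1} of the tip of f does not,
   so no tip of R divides it. *)

Section Words.
Variable n : nat.
Implicit Types (x y : sym n) (a b : word n).

Lemma deglex_le_size a b : deglex_le a b -> (size a <= size b)%N.
Proof.
by rewrite /deglex_le /deglex_lt => /orP [/eqP ->|/orP [/ltnW|/andP [/eqP -> _]]].
Qed.

Lemma deglex_le_cons x y a b : size a = size b ->
  deglex_le (x :: a) (y :: b) = (rk x < rk y)%N || (x == y) && deglex_le a b.
Proof.
move=> eq_size; rewrite /deglex_le /deglex_lt /= eqseq_cons eq_size !ltnn !eqxx /=.
by case: eqP => [->|_] /=; rewrite ?ltnn /= ?orbF.
Qed.

Lemma sym_eqE x y :
  (x == y) = [&& x.1.1 == y.1.1, x.1.2 == y.1.2 :> nat & x.2 == y.2 :> nat].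
Proof. by case: x => [[? ?] ?]; case: y => [[? ?] ?]; rewrite !xpair_eqE -andbA. Qed.

Definition on_border x : bool := (x.1.2 == n.-1 :> nat) || (x.2 == n.-1 :> nat).

End Words.

Lemma mid_in_factor (T : eqType) (x y z : T) (a f b : seq T) :
  [:: x; y; z] = a ++ f ++ b -> size f = 2 -> y \in f.
Proof.
case: f => [|f1 [|f2 [|]]] // + _.
case: a => [|a1 [|a2 [|a3 a]]] [] //.
- by move=> _ ->; rewrite !inE eqxx orbT.
- by move=> _ ->; rewrite !inE eqxx.
- by move=> _ _ _ /(congr1 size); rewrite size_cat /= addnS.
Qed.

Lemma sum_ord_if_neq0 (R : nmodType) m (P : pred 'I_m) (F : 'I_m -> R) :
  \sum_(s < m) (if P s then F s else 0) != 0 -> exists s : 'I_m, P s.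
Proof.
move=> nz; apply/existsP; apply: contraNT nz => /existsPn none.
by rewrite big1 // => s _; rewrite (negbTE (none s)).
Qed.

Lemma sum_ord_if_pred1 (R : semiRingType) m (s0 : 'I_m) (P : pred 'I_m) :
  (forall s : 'I_m, P s = (s == s0)) -> \sum_(s < m) (if P s then 1 else 0 : R) = 1.
Proof. by move=> P_s0; rewrite -big_mkcond (big_pred1 s0). Qed.

Section Relations.
Variables (k : fieldType) (n : nat).

Definition rel_word (A : 'I_4) (j i s : 'I_n) : word n :=
  [:: Mmat A j (rr s); dag_mat (Mmat A) s (rr i)].

Lemma coef_fmul_mono (a b : word n) (p : fpoly k n) w :
  coef (fmul (fmul (fmono a) p) (fmono b)) w =
  \sum_(t <- p) (if a ++ t.2 ++ b == w then t.1 else 0).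
Proof.
rewrite /coef /fmul /fmono /=; elim: p => [|t p IHp] /=; first by rewrite !big_nil.
by rewrite !big_cons /= IHp catA mul1r mulr1.
Qed.

Lemma coef_rel_term (a b : word n) A (j i : 'I_n) w :
  coef (fmul (fmul (fmono a) (@Defs.rel k n A j i)) (fmono b)) w =
  \sum_s (if a ++ rel_word A j i s ++ b == w then 1 else 0)
  - (if (j == i) && (a ++ b == w) then 1 else 0).
Proof.
rewrite coef_fmul_mono /Defs.rel big_cat big_map big_enum /=; congr (_ + _).
by case: (j == i); rewrite ?big_cons ?big_nil /= ?oppr0 // addr0; case: ifP; rewrite ?oppr0.
Qed.

Lemma coef_rel A (j i : 'I_n) w :
  coef (@Defs.rel k n A j i) w =
  \sum_s (if rel_word A j i s == w then 1 else 0)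
  - (if (j == i) && ([::] == w) then 1 else 0).
Proof.
transitivity (coef (fmul (fmul (fmono [::]) (@Defs.rel k n A j i)) (fmono [::])) w).
  by rewrite coef_fmul_mono; apply: eq_bigr => t _; rewrite cats0.
by rewrite coef_rel_term; under eq_bigr do rewrite cats0.
Qed.

Lemma rel_word_inj A (j i : 'I_n) : injective (rel_word A j i).
Proof.
move=> s s'; rewrite /rel_word /Mmat /u_mat /tr_mat /star_mat /dag_mat /ustar /rr.
case: A => [[|[|[|a]]] ?] /= [] *; apply/val_inj => /=.
all: by have := ltn_ord s; have := ltn_ord s'; lia.
Qed.

Lemma coef_rel_word A (j i s : 'I_n) : coef (@Defs.rel k n A j i) (rel_word A j i s) = 1.
Proof.
rewrite coef_rel -big_mkcond (big_pred1 s) /= ?andbF ?subr0 // => s'.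
exact: (inj_eq (@rel_word_inj A j i)).
Qed.

Lemma tip_rel A (j i : 'I_n) mr : is_tip (coef (@Defs.rel k n A j i)) mr ->
  exists2 s0, mr = rel_word A j i s0 & forall s, deglex_le (rel_word A j i s) mr.
Proof.
case=> nz_mr max_mr.
have dom s : deglex_le (rel_word A j i s) mr.
  by apply: max_mr; rewrite coef_rel_word oner_neq0.
have [s0 /eqP/esym mr_s0|none] := pickP (fun s => rel_word A j i s == mr); first by exists s0.
move: nz_mr; rewrite coef_rel big1 => [|s _]; last by rewrite none.
rewrite sub0r oppr_eq0; case: ifP => [/andP [_ /eqP mr_nil]|_]; last by rewrite eqxx.
by have := deglex_le_size (dom j); rewrite -mr_nil.
Qed.

Lemma tip_rel_on_border A (j i : 'I_n) mr : is_tip (coef (@Defs.rel k n A j i)) mr ->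
  size mr = 2 /\ all (@on_border n) mr.
Proof.
case/tip_rel => s0 -> dom; split => //.
pose s_zero : 'I_n := Ordinal (leq_ltn_trans (leq0n s0) (ltn_ord s0)).
have := ltn_ord s0.
case: A dom => [[|[|[|[|a]]]] //= ?] dom;
  [move: (dom s_zero) | move: (dom s_zero) | move: (dom (rr s_zero)) | move: (dom (rr s_zero))].
all: rewrite /rel_word /Mmat /u_mat /tr_mat /star_mat /dag_mat /ustar /rr /=.
all: rewrite !rev_ordK !deglex_le_cons // /deglex_le eqxx /on_border /rk /=.
all: rewrite !sym_eqE /=; nia.
Qed.

End Relations.

Section Witness.
Variables (k : fieldType) (n' : nat).
Local Notation n := n'.+2.

Definition witness_comb : seq (k * word n * Ridx n * word n) :=
  [:: (1, [::], (@Ordinal 4 0 isT, ord0, ord0), [:: (false, ord0, ord_max)]);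
      (-1, [:: (false, ord0, ord_max)], (@Ordinal 4 2 isT, ord_max, ord_max), [::])].

Definition witness (w : word n) : k :=
  \sum_(t <- witness_comb)
    t.1.1.1 * coef (fmul (fmul (fmono t.1.1.2) (relR t.1.2)) (fmono t.2)) w.

Lemma inI_witness : inI witness.
Proof. by exists witness_comb. Qed.

Lemma witnessE w : witness w =
  \sum_s (if [:: (false, ord0, rr s); (true, ord0, rr s); (false, ord0, ord_max)] == w
           then 1 else 0)
  - \sum_s (if [:: (false, ord0, ord_max); (true, ord0, s); (false, ord0, s)] == w
             then 1 else 0).
Proof.
have rr_max : rev_ord (ord_max : 'I_n) = ord0 by apply: val_inj; rewrite /= subnn.
rewrite /witness !big_cons big_nil /relR /= !coef_rel_term.
rewrite /rel_word /Mmat /u_mat /star_mat /dag_mat /ustar /rr /= !rev_ordK rr_max.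
rewrite !eqxx /= mul1r mulN1r addr0 opprB addrA subrK.
by congr (_ - _); apply: eq_bigr => s _; rewrite rev_ordK.
Qed.

Definition witness_tip : word n :=
  [:: (false, ord0, ord_max); (true, ord0, inord n'); (false, ord0, inord n')].

Lemma witness_tipP : is_tip witness witness_tip.
Proof.
pose w_cancelled : word n :=
  [:: (false, ord0, ord_max); (true, ord0, ord_max); (false, ord0, ord_max)].
have val_inord : (inord n' : 'I_n) = n' :> nat by rewrite inordK.
have witness_cancelled : witness w_cancelled = 0.
  rewrite witnessE (@sum_ord_if_pred1 _ _ ord0) ?(@sum_ord_if_pred1 _ _ ord_max) ?subrr // => s;
  by rewrite /w_cancelled /rr !eqseq_cons !sym_eqE !eqxx /= -val_eqE /=; apply/idP/idP; lia.
have tip_val : witness witness_tip = -1.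
  rewrite witnessE big1 => [|s _].
    rewrite sub0r (@sum_ord_if_pred1 _ _ (inord n')) // => s.
    by rewrite /witness_tip !eqseq_cons !sym_eqE !eqxx /= -val_eqE /= val_inord; apply/idP/idP; lia.
  by rewrite /witness_tip /rr !eqseq_cons !sym_eqE /= val_inord ifN //; lia.
split=> [|w nz_w]; first by rewrite tip_val oppr_eq0 oner_eq0.
have w_neq : w != w_cancelled by apply: contraNneq _ nz_w => ->; rewrite witness_cancelled.
move: nz_w; rewrite witnessE; set S1 := (X in X - _) => nz_w.
have [S1_0|/sum_ord_if_neq0 [s /eqP w_eq]] := eqVneq S1 0.
  move: nz_w; rewrite S1_0 sub0r oppr_eq0 => /sum_ord_if_neq0 [s /eqP w_eq].
all: subst w; rewrite /witness_tip !deglex_le_cons // /deglex_le eqxx /rk /rr !sym_eqE /=.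
all: rewrite /w_cancelled /rr !eqseq_cons !sym_eqE !eqxx /= in w_neq.
all: by rewrite val_inord; have := ltn_ord s; nia.
Qed.

End Witness.

Theorem mainTheorem15 (k : fieldType) (n : nat) (hn : (2 <= n)%N) :
  ~ R_is_groebner k n.
Proof.
case: n hn => [|[|n']] // _ groebner.
have [[[A j] i] [mr [a [b [tip_mr factor]]]]] :=
  groebner _ _ (inI_witness k n') (witness_tipP k n').
have [size_mr border_mr] := tip_rel_on_border tip_mr.
have := allP border_mr _ (mid_in_factor factor size_mr).
by rewrite /on_border /= inordK //; lia.
Qed.
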